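(* For an arbitrary integer $k\ge 3$ and an arbitrary integer $n$ with $\frac{k+1}{2} \leq n \leq k$, there exists a finite simple graph $G$ with an edge $e$ such that $\chi_\rho(G)=k$ and $\chi_\rho(G-e)=n$.
   Context: A $k$-packing coloring of a graph $G$ is a map $c:V(G)\to\{1,\ldots,k\}$ such that two distinct vertices $u,v$ with $c(u)=c(v)=i$ satisfy $d_G(u,v)>i$ (distance between vertices in different components is infinite). The packing chromatic number $\chi_\rho(G)$ is the smallest $k$ for which $G$ admits a $k$-packing coloring. $G-e$ denotes the graph obtained by deleting the edge $e$. *)

From mathcomp Require Import all_boot.
Set Implicit Arguments. Unset Strict Implicit. Unset Printing Implicit Defensive.

Definition simple_graph (T : finType) (g : rel T) : Prop :=
  irreflexive g /\ symmetric g.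

(* d_G(u,v) <= d : there is a walk (hence a path) from u to v with at most d edges.
   If u, v are in different components this never holds (distance = infinity). *)
Definition within_dist (T : finType) (g : rel T) (d : nat) (u v : T) : Prop :=
  exists p : seq T, [/\ path g u p, last u p = v & size p <= d].

Definition packing_coloring (T : finType) (g : rel T) (k : nat) (c : T -> nat) : Prop :=
  (forall x, 1 <= c x <= k) /\
  (forall u v, u != v -> c u = c v -> ~ within_dist g (c u) u v).

Definition packing_colorable (T : finType) (g : rel T) (k : nat) : Prop :=
  exists c : T -> nat, packing_coloring g k c.

Definition packing_chromatic_number_is (T : finType) (g : rel T) (k : nat) : Prop :=
  packing_colorable g k /\ forall j, packing_colorable g j -> k <= j.

Definition delete_edge (T : finType) (g : rel T) (x y : T) : rel T :=
  fun a b => g a b && ~~ (((a == x) && (b == y)) || ((a == y) && (b == x))).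

(* If n = k, take the clique K_k with a pendant leaf and delete the pendant edge: the
   clique forces k colours in both graphs.

   If n < k, let a = k - n + 1, so that 2 <= a <= n.  Join a clique K_a and a clique K_n by
   a bridge e between two hubs, and hang two leaves on every other clique vertex.  Without
   e each component is coloured by its clique, leaves taking colour 1, so n colours suffice
   and K_n needs them.  With e, colour K_a by 1..a (its hub by 1), the other hub by a + 1,
   one more vertex of K_n by 2 (it is at distance 3 from the 2 of K_a) and the rest of K_n
   by a + 2, ..., a + n - 1.  Conversely, any two clique vertices are at distance at most 3.
   If colour 1 is used on clique vertices only at hubs, the two cliques share at most the
   colour 2, which already forces a + n - 1 colours.  If colour 1 sits on a non-hub clique
   vertex t, the leaves of t avoid colour 1, so the clique of t together with these leaves
   has diameter 2 and gets pairwise distinct colours; it is within distance 4 of the other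
   clique, so the two share at most the colours 1, 2, 3, and again a + n - 1 colours are
   needed. *)

From mathcomp Require Import all_boot zify.
Set Implicit Arguments. Unset Strict Implicit. Unset Printing Implicit Defensive.

Section WithinDist.
Variables (T : finType) (g : rel T).

Lemma within_dist_refl d u : within_dist g d u u.
Proof. by exists [::]. Qed.

Lemma within_dist_edge d u v : 0 < d -> g u v -> within_dist g d u v.
Proof. by move=> d_gt0 guv; exists [:: v]; rewrite /= guv. Qed.

Lemma within_dist_mono d d' u v :
  d <= d' -> within_dist g d u v -> within_dist g d' u v.
Proof. by move=> le_dd' [p [gp pv sz_p]]; exists p; split => //; apply: leq_trans le_dd'. Qed.

Lemma within_dist_cat d1 d2 u w v :
  within_dist g d1 u w -> within_dist g d2 w v -> within_dist g (d1 + d2) u v.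
Proof.
move=> [p [gp pw sz_p]] [q [gq qv sz_q]]; exists (p ++ q).
by rewrite cat_path last_cat pw gp gq qv size_cat leq_add.
Qed.

Lemma within_dist1 u v : within_dist g 1 u v <-> u = v \/ g u v.
Proof.
split=> [|[->|guv]]; [|exact: within_dist_refl|exact: within_dist_edge].
move=> [[|w [|w2 p]] [/= + <- ]] //; first by left.
by rewrite andbT; right.
Qed.

Lemma within_dist2 u v :
  within_dist g 2 u v -> [\/ u = v, g u v | exists2 w, g u w & g w v].
Proof.
move=> [[|w [|w2 [|w3 p]]] [/= + <- ]] //; first by constructor 1.
- by rewrite andbT; constructor 2.
- by rewrite andbT => /andP[guw gww']; constructor 3; exists w.
Qed.

Lemma within_dist_invariant (U : Type) (f : T -> U) d u v :
  (forall x y, g x y -> f x = f y) -> within_dist g d u v -> f u = f v.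
Proof.
move=> gf [p [+ <- _]]; elim: p u => //= w p IHp u /andP[guw gp].
by rewrite (gf _ _ guw) IHp.
Qed.

Lemma within_dist_sym d u v :
  symmetric g -> within_dist g d u v -> within_dist g d v u.
Proof.
move=> gsym [p [gp pv sz_p]]; exists (rev (belast u p)); split.
- by rewrite -pv rev_path; apply: sub_path gp => x y; rewrite gsym.
- by case: p {gp sz_p} pv => [|w p] <- //=; rewrite rev_cons last_rcons.
- by rewrite size_rev size_belast.
Qed.

End WithinDist.

Definition clique (T : finType) (g : rel T) (Q : {set T}) : Prop :=
  {in Q &, forall u v, u != v -> g u v}.

Lemma packing_coloring_subrel (T : finType) (g g' : rel T) k c :
  subrel g' g -> packing_coloring g k c -> packing_coloring g' k c.
Proof.
move=> g'g [c_range c_far]; split=> // u v uv cuv [p [gp pv sz_p]].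
by apply: (c_far u v uv cuv); exists p; split => //; apply: sub_path gp.
Qed.

Section PackingColoring.
Variables (T : finType) (g : rel T) (k : nat) (c : T -> nat).
Hypothesis c_packing : packing_coloring g k c.

Lemma packing_color_range x : 1 <= c x <= k.
Proof. exact: c_packing.1. Qed.

Lemma packing_color_lt d u v :
  u != v -> c u = c v -> within_dist g d u v -> c u < d.
Proof.
move=> uv cuv uv_d; rewrite ltnNge; apply/negP => le_d_cu.
by apply: (c_packing.2 u v uv cuv); apply: within_dist_mono uv_d.
Qed.

Lemma packing_clique_inj Q : clique g Q -> {in Q &, injective c}.
Proof.
move=> Qg u v uQ vQ cuv; apply/eqP; apply: contraT => uv.
have := packing_color_lt uv cuv (within_dist_edge (isT : 0 < 1) (Qg u v uQ vQ uv)).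
by have := packing_color_range u; lia.
Qed.

Lemma card_le_packing_colors (A B : {set T}) (L : seq nat) :
  {in A &, injective c} -> {in B &, injective c} ->
  (forall u v, u \in A -> v \in B -> c u = c v -> c u \in L) ->
  #|A| + #|B| <= k + size L.
Proof.
move=> injA injB common.
pose col v : 'I_k.+1 := inord (c v).
have colE v : col v = c v :> nat.
  by rewrite inordK // ltnS; case/andP: (packing_color_range v).
have card_col (C : {set T}) : {in C &, injective c} -> #|col @: C| = #|C|.
  move=> injC; apply: card_in_imset => u v uC vC /(congr1 (@nat_of_ord _)).
  by rewrite !colE; apply: injC.
have cardU : #|col @: A :|: col @: B| <= k.
  suff /subset_leq_card : col @: A :|: col @: B \subset [set~ ord0].
    by rewrite cardsC1 card_ord.
  apply/subsetP => i; rewrite !inE -val_eqE /=.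
  by case/orP => /imsetP[v _ ->]; rewrite colE -lt0n; case/andP: (packing_color_range v).
have cardI : #|col @: A :&: col @: B| <= size L.
  rewrite -(size_map (@inord k)); apply: leq_trans (card_size _).
  apply: subset_leq_card; apply/subsetP => i; rewrite !inE.
  case/andP=> /imsetP[u uA ->] /imsetP[v vB /(congr1 (@nat_of_ord _))]; rewrite !colE => cuv.
  by apply/mapP; exists (c u); first exact: common uA vB cuv.
by have := cardsUI (col @: A) (col @: B); rewrite !card_col //; lia.
Qed.

Lemma packing_inj_diam2 (A : {set T}) :
  (forall u v, u \in A -> v \in A -> within_dist g 2 u v) ->
  clique g [set u in A | c u == 1] -> {in A &, injective c}.
Proof.
move=> A_diam A1 u v uA vA cuv; apply/eqP; apply: contraT => uv.
have cu1 : c u = 1.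
  have := packing_color_lt uv cuv (A_diam u v uA vA).
  by have := packing_color_range u; lia.
have cv1 : c v = 1 by rewrite -cuv.
have inA1 w : w \in A -> c w = 1 -> w \in [set u in A | c u == 1].
  by move=> wA cw1; rewrite inE wA cw1.
by move: uv; rewrite (packing_clique_inj A1 (inA1 u uA cu1) (inA1 v vA cv1) cuv) eqxx.
Qed.

Lemma clique_card_le Q : clique g Q -> #|Q| <= k.
Proof.
move=> Qg; rewrite -[#|Q|]addn0 -(cards0 T) -[k]addn0.
apply: (card_le_packing_colors (L := [::])) => [|u v|u v _]; rewrite ?inE //.
exact: packing_clique_inj.
Qed.

End PackingColoring.

Lemma packing_chromatic_number_is_intro (T : finType) (g : rel T) k c :
  packing_coloring g k c -> (forall j c', packing_coloring g j c' -> k <= j) ->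
  packing_chromatic_number_is g k.
Proof. by move=> c_packing k_min; split=> [|j [c']]; [exists c | apply: k_min]. Qed.

Lemma delete_edge_subrel (T : finType) (g : rel T) x y : subrel (delete_edge g x y) g.
Proof. by move=> u v /andP[]. Qed.

Section LeafedClique.
Variable m : nat.

Definition leafed_clique : rel 'I_m.+2 := fun u v =>
  (u != v) && [|| (u < m.+1) && (v < m.+1), (u == ord0) && (v == ord_max)
                | (u == ord_max) && (v == ord0)].

Definition leafed_coloring (u : 'I_m.+2) : nat :=
  if u == ord_max then 1 else if u == ord0 then m.+1 else u.

Local Notation G := leafed_clique.
Local Notation Ge := (delete_edge leafed_clique ord_max ord0).

Ltac case_ord u := case: u => ? ?.
Ltac ord_arith :=
  rewrite /leafed_clique /leafed_coloring /delete_edge ?inE /= -?val_eqE /=;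
  repeat (case: ifP => /= ?); lia.

Lemma leafed_clique_irr : irreflexive G.
Proof. by move=> u; case_ord u; ord_arith. Qed.

Lemma leafed_clique_sym : symmetric G.
Proof. by move=> u v; case_ord u; case_ord v; apply/idP/idP; ord_arith. Qed.

Lemma leafed_clique_leaf : G ord_max ord0.
Proof. by rewrite /leafed_clique -val_eqE /= !eqxx orbT. Qed.

Lemma leafed_clique_delete_clique : clique Ge [set~ ord_max].
Proof. by move=> u v; case_ord u; case_ord v; ord_arith. Qed.

Lemma leafed_clique_delete_lower j c : packing_coloring Ge j c -> m.+1 <= j.
Proof.
move=> c_packing; have := clique_card_le c_packing leafed_clique_delete_clique.
by rewrite cardsC1 card_ord.
Qed.

Hypothesis m_gt0 : 0 < m.

Lemma leafed_coloring_repeat u v :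
  u != v -> leafed_coloring u = leafed_coloring v -> leafed_coloring u = 1 /\ ~~ G u v.
Proof. by case_ord u; case_ord v; ord_arith. Qed.

Lemma leafed_coloring_packing : packing_coloring G m.+1 leafed_coloring.
Proof.
split=> [u|u v uv cuv]; first by case_ord u; ord_arith.
case: (leafed_coloring_repeat uv cuv) => -> /negP nguv /within_dist1[uv'|//].
by rewrite uv' eqxx in uv.
Qed.

Lemma leafed_clique_packing_number : packing_chromatic_number_is G m.+1.
Proof.
apply: packing_chromatic_number_is_intro leafed_coloring_packing _ => j c c_packing.
exact/leafed_clique_delete_lower/packing_coloring_subrel/c_packing/delete_edge_subrel.
Qed.

Lemma leafed_clique_delete_packing_number : packing_chromatic_number_is Ge m.+1.
Proof.
apply: packing_chromatic_number_is_intro _ leafed_clique_delete_lower.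
exact/packing_coloring_subrel/leafed_coloring_packing/delete_edge_subrel.
Qed.

End LeafedClique.

Section BridgedCliques.
Variables a b : nat.

Local Notation vertex := (bool * 'I_b.+1 * 'I_3)%type.

Definition clique_size (s : bool) : nat := if s then b else a.

(* Vertex (s, i, l) has side s, index i and layer l.  The core of side s, made of the
   (s, i, 0) with i < clique_size s, is a clique; hub s = (s, 0, 0) is joined to the other
   hub by the bridge, and every other core vertex (s, i, 0) carries the two leaves (s, i, 1)
   and (s, i, 2).  The vertices (s, i, l) with i >= clique_size s are isolated padding. *)
Definition core (s : bool) : {set vertex} :=
  [set v : vertex | [&& v.1.1 == s, v.1.2 < clique_size s & v.2 == ord0]].

Definition hub (s : bool) : vertex := (s, ord0, ord0).

Definition bridged_cliques : rel vertex := fun u v =>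
  [|| [&& u \in core u.1.1, v \in core u.1.1 & u != v],
      [&& u.1 == v.1, 0 < u.1.2 < clique_size u.1.1 & (u.2 == ord0) != (v.2 == ord0)]
    | [&& u.1.1 != v.1.1, u.1.2 == ord0, v.1.2 == ord0, u.2 == ord0 & v.2 == ord0]].

(* Colour 2 is used once on each side, at (false, 1, 0) and (true, 1, 0), which are at
   distance 3; colour 1 is used on the hub of side false, on leaves and on padding. *)
Definition bridged_coloring (v : vertex) : nat :=
  if v \in core v.1.1 then
    if v.1.1 then
      if v.1.2 == ord0 then a.+1 else if v.1.2 == 1 :> nat then 2 else a + v.1.2
    else v.1.2.+1
  else 1.

Definition split_coloring (v : vertex) : nat :=
  if v \in core v.1.1 then v.1.2.+1 else 1.

Local Notation G := bridged_cliques.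
Local Notation Ge := (delete_edge bridged_cliques (hub false) (hub true)).

Ltac case_vertex v := case: v => [[[] [? ?]] [? ?]].
Ltac vertex_arith :=
  rewrite /bridged_cliques /clique_size /hub /core /bridged_coloring /split_coloring
          /delete_edge ?inE /= ?xpair_eqE -?val_eqE /=;
  repeat (case: ifP => /= ?); lia.

Lemma bridged_cliques_irr : irreflexive G.
Proof. move=> u; case_vertex u; vertex_arith. Qed.

Lemma bridged_cliques_sym : symmetric G.
Proof. move=> u v; case_vertex u; case_vertex v; apply/idP/idP; vertex_arith. Qed.

Lemma bridge_edge : G (hub false) (hub true).
Proof. vertex_arith. Qed.

Lemma core_clique s : clique G (core s).
Proof. move=> u v; case_vertex u; case_vertex v; case: s; vertex_arith. Qed.

Lemma leaf_edge s t (l : 'I_3) : t \in core s -> t != hub s -> l != ord0 -> G t (t.1, l).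
Proof. case: l => l ?; case_vertex t; case: s; vertex_arith. Qed.

Lemma core_side s u : u \in core s -> u.1.1 = s.
Proof. by rewrite inE => /andP[/eqP]. Qed.

Definition core_leaves (s : bool) (t : vertex) : {set vertex} :=
  (t.1, Ordinal (isT : 1 < 3)) |: ((t.1, Ordinal (isT : 2 < 3)) |: core s).

Lemma card_core_leaves s t : #|core_leaves s t| = #|core s| + 2.
Proof.
rewrite !cardsU1 !in_setU1 !inE xpair_eqE -!val_eqE /= !andbF /=.
by rewrite add1n add1n addn2.
Qed.

Lemma core_leaves_side s t u : t \in core s -> u \in core_leaves s t -> u.1.1 = s.
Proof. by move=> /core_side ts; rewrite !in_setU1 => /or3P[/eqP->|/eqP->|/core_side]. Qed.

Lemma core_leaves_leaf s t u :
  t \in core s -> t != hub s -> u \in core_leaves s t -> u \notin core s -> G t u.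
Proof.
move=> tK t_hub; rewrite !in_setU1 => /or3P[/eqP->|/eqP->|->//] _.
all: exact: leaf_edge tK t_hub _.
Qed.

Lemma neq_core_opp s u v : u.1.1 = s -> v \in core (~~ s) -> u != v.
Proof. by move=> us /core_side vs; apply/eqP => uv; move: vs; rewrite -uv us; case: (s). Qed.

Lemma delete_bridge_side u v : Ge u v -> u.1.1 = v.1.1.
Proof. case_vertex u; case_vertex v; vertex_arith. Qed.

Lemma core_clique_delete_bridge s : clique Ge (core s).
Proof. move=> u v; case_vertex u; case_vertex v; case: s; vertex_arith. Qed.

Lemma bridge_dist s : within_dist G 1 (hub s) (hub (~~ s)).
Proof.
apply/within_dist1; right.
by case: s; [rewrite bridged_cliques_sym |]; apply: bridge_edge.
Qed.

Hypotheses (a_gt0 : 0 < a) (a_le_b : a <= b).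

Lemma clique_size_le_card_core s : clique_size s <= #|core s|.
Proof.
have size_le_b : clique_size s <= b by case: s.
pose v (i : 'I_(clique_size s)) : vertex := (s, widen_ord (leqW size_le_b) i, ord0).
have v_inj : injective v by move=> i i' /(congr1 (fun x : vertex => val x.1.2)) /= /val_inj.
rewrite -[X in X <= _](card_ord (clique_size s)) -(card_imset _ v_inj).
by apply/subset_leq_card/subsetP => _ /imsetP[i _ ->]; rewrite inE /= eqxx ltn_ord.
Qed.

Lemma hub_in_core s : hub s \in core s.
Proof. case: s; vertex_arith. Qed.

Lemma near_hub s u : u \in core s -> within_dist G 1 u (hub s).
Proof.
move=> uK; apply/within_dist1; have [->|u_hub] := eqVneq u (hub s); [by left | right].
exact: core_clique uK (hub_in_core s) u_hub.
Qed.

Lemma core_dist s u v : u \in core s -> v \in core (~~ s) -> within_dist G 3 u v.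
Proof.
move=> uK vK; apply: (within_dist_cat (within_dist_cat (near_hub uK) (bridge_dist s))).
exact: within_dist_sym bridged_cliques_sym (near_hub vK).
Qed.

Lemma split_coloring_range v : 1 <= split_coloring v <= b.
Proof. case_vertex v; vertex_arith. Qed.

Lemma split_coloring_inj u v :
  split_coloring u = split_coloring v -> 1 < split_coloring u -> u.1.1 = v.1.1 -> u = v.
Proof.
move=> cuv cu_gt1 /eqP suv; apply/eqP; move: cuv cu_gt1 suv.
case_vertex u; case_vertex v; vertex_arith.
Qed.

Lemma split_coloring1 u v : split_coloring u = 1 -> split_coloring v = 1 -> ~~ Ge u v.
Proof. case_vertex u; case_vertex v; vertex_arith. Qed.

Lemma split_coloring_packing : packing_coloring Ge b split_coloring.
Proof.
split=> [v|u v uv cuv uv_d]; first exact: split_coloring_range.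
have suv : u.1.1 = v.1.1 := within_dist_invariant (f := fun w => w.1.1) delete_bridge_side uv_d.
have [cu_gt1|cu_le1] := ltnP 1 (split_coloring u).
  by move: uv; rewrite (split_coloring_inj cuv cu_gt1 suv) eqxx.
have cu1 : split_coloring u = 1 by have := split_coloring_range u; lia.
move: uv_d; rewrite cu1 => /within_dist1[uv'|]; first by rewrite uv' eqxx in uv.
by apply/negP/split_coloring1; rewrite -?cuv.
Qed.

Lemma delete_bridge_lower j c : packing_coloring Ge j c -> b <= j.
Proof.
move=> c_packing; apply: leq_trans (clique_size_le_card_core true) _.
by have := clique_card_le c_packing (@core_clique_delete_bridge true).
Qed.

Lemma delete_bridge_packing_number : packing_chromatic_number_is Ge b.
Proof. exact: packing_chromatic_number_is_intro split_coloring_packing delete_bridge_lower. Qed.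

Hypothesis a_gt1 : 1 < a.

Lemma bridged_coloring_range v : 1 <= bridged_coloring v <= a + b - 1.
Proof. case_vertex v; vertex_arith. Qed.

Lemma bridged_coloring_inj u v :
  bridged_coloring u = bridged_coloring v -> 2 < bridged_coloring u -> u = v.
Proof.
move=> cuv cu_gt2; apply/eqP; move: cuv cu_gt2.
case_vertex u; case_vertex v; vertex_arith.
Qed.

Lemma bridged_coloring1 u v :
  bridged_coloring u = 1 -> bridged_coloring v = 1 -> ~~ G u v.
Proof. case_vertex u; case_vertex v; vertex_arith. Qed.

Lemma bridged_coloring2 u v w :
  bridged_coloring u = 2 -> bridged_coloring v = 2 -> u != v ->
  ~~ G u v && ~~ (G u w && G w v).
Proof. case_vertex u; case_vertex v; case_vertex w; vertex_arith. Qed.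

Lemma bridged_coloring_packing : packing_coloring G (a + b - 1) bridged_coloring.
Proof.
split=> [v|u v uv cuv uv_d]; first exact: bridged_coloring_range.
have : [|| bridged_coloring u == 1, bridged_coloring u == 2 | 2 < bridged_coloring u].
  by have := bridged_coloring_range u; lia.
case/or3P=> [/eqP cu1|/eqP cu2|cu_gt2].
- move: uv_d; rewrite cu1 => /within_dist1[uv'|guv]; first by rewrite uv' eqxx in uv.
  by move: guv; apply/negP/bridged_coloring1; rewrite -?cuv.
- have cv2 : bridged_coloring v = 2 by rewrite -cuv.
  move: uv_d; rewrite cu2 => /within_dist2[uv'|guv|[w guw gwv]].
  + by rewrite uv' eqxx in uv.
  + by case/andP: (bridged_coloring2 u cu2 cv2 uv); rewrite guv.
  + by case/andP: (bridged_coloring2 w cu2 cv2 uv); rewrite guw gwv.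
- by move: uv; rewrite (bridged_coloring_inj cuv cu_gt2) eqxx.
Qed.

Section LowerBound.
Variables (j : nat) (c : vertex -> nat).
Hypothesis c_packing : packing_coloring G j c.

Lemma lower_bound_inner_color1 s t :
  t \in core s -> t != hub s -> c t = 1 -> a + b - 1 <= j.
Proof.
move=> tK t_hub ct1; set A := core_leaves s t.
have near_t u : u \in A -> within_dist G 1 u t.
  move=> uA; apply/within_dist1; have [->|ut] := eqVneq u t; [by left | right].
  have [uK|uNK] := boolP (u \in core s); first exact: core_clique uK tK ut.
  by rewrite bridged_cliques_sym; apply: core_leaves_leaf uA uNK.
have A1_core : [set u in A | c u == 1] \subset core s.
  apply/subsetP => u; rewrite inE => /andP[uA /eqP cu1]; apply: contraT => uNK.
  have tu : within_dist G 1 t u := within_dist_edge (d := 1) isT (core_leaves_leaf tK t_hub uA uNK).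
  have t_neq_u : t != u by apply: contraNneq uNK => <-.
  by have := packing_color_lt c_packing t_neq_u (etrans ct1 (esym cu1)) tu; rewrite ct1.
have injA : {in A &, injective c}.
  apply: (packing_inj_diam2 c_packing) => [u v uA vA|u v uA1 vA1].
    exact: within_dist_cat (near_t u uA) (within_dist_sym bridged_cliques_sym (near_t v vA)).
  exact: core_clique (subsetP A1_core u uA1) (subsetP A1_core v vA1).
have common u v : u \in A -> v \in core (~~ s) -> c u = c v -> c u \in [:: 1; 2; 3].
  move=> uA vK cuv; have uv := neq_core_opp (core_leaves_side tK uA) vK.
  have := packing_color_lt c_packing uv cuv (within_dist_cat (near_t u uA) (core_dist tK vK)).
  by rewrite !inE; have := packing_color_range c_packing u; lia.
have := card_le_packing_colors c_packing injA
  (packing_clique_inj c_packing (@core_clique (~~ s))) common.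
rewrite card_core_leaves.
have := clique_size_le_card_core s; have := clique_size_le_card_core (~~ s).
(* the two occurrences of each cardinal differ in hidden coercions; naming them gives lia one atom *)
set x := #|core s|; set y := #|core (~~ s)|.
by case: (s) => /=; lia.
Qed.

Lemma lower_bound_hub_color1 :
  (forall s t, t \in core s -> c t = 1 -> t = hub s) -> a + b - 1 <= j.
Proof.
move=> only_hubs1.
have common u v : u \in core false -> v \in core true -> c u = c v -> c u \in [:: 2].
  move=> uK vK cuv; have uv := neq_core_opp (core_side uK) vK.
  have := packing_color_lt c_packing uv cuv (core_dist uK vK).
  have [cu1 _|] := eqVneq (c u) 1.
    have hubs_d : within_dist G 1 u v.
      rewrite (only_hubs1 _ _ uK cu1) (only_hubs1 _ _ vK (etrans (esym cuv) cu1)).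
      exact: bridge_dist false.
    by have := packing_color_lt c_packing uv cuv hubs_d; rewrite cu1.
  by rewrite inE; have := packing_color_range c_packing u; lia.
have := card_le_packing_colors c_packing (packing_clique_inj c_packing (@core_clique false))
  (packing_clique_inj c_packing (@core_clique true)) common.
have := clique_size_le_card_core false; have := clique_size_le_card_core true.
set x := #|core false|; set y := #|core true|; rewrite /=; lia.
Qed.

Lemma bridged_cliques_lower : a + b - 1 <= j.
Proof.
case: (boolP [exists s, exists t, [&& t \in core s, t != hub s & c t == 1]]).
  by case/existsP=> s /existsP[t /and3P[tK t_hub /eqP /(lower_bound_inner_color1 tK t_hub)]].
move=> /existsPn no_inner1; apply: lower_bound_hub_color1 => s t tK ct1.
by apply/eqP; move/existsPn/(_ t): (no_inner1 s); rewrite tK ct1 eqxx andbT negbK.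
Qed.

End LowerBound.

Lemma bridged_cliques_packing_number : packing_chromatic_number_is G (a + b - 1).
Proof. exact: packing_chromatic_number_is_intro bridged_coloring_packing bridged_cliques_lower. Qed.

End BridgedCliques.

Theorem theorem2p2 (k n : nat) :
  3 <= k -> k + 1 <= 2 * n -> n <= k ->
  exists (T : finType) (g : rel T) (x y : T),
    [/\ simple_graph g, g x y,
        packing_chromatic_number_is g k
      & packing_chromatic_number_is (delete_edge g x y) n].
Proof.
move=> k_ge3 k_lt_2n n_le_k; have [n_lt_k | k_le_n] := ltnP n k.
- have [a [-> a_gt1 a_le_n]] : exists a, [/\ k = a + n - 1, 1 < a & a <= n].
    by exists (k - n + 1); split; lia.
  have a_gt0 := ltnW a_gt1.
  exists _, (@bridged_cliques a n), (hub n false), (hub n true); split.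
  + by split; [apply: bridged_cliques_irr | apply: bridged_cliques_sym].
  + exact: bridge_edge.
  + exact: bridged_cliques_packing_number.
  + exact: delete_bridge_packing_number.
- have -> : n = k by lia.
  case: k k_ge3 {k_lt_2n n_le_k k_le_n} => // m m_ge2.
  exists _, (@leafed_clique m), ord_max, ord0; split.
  + by split; [apply: leafed_clique_irr | apply: leafed_clique_sym].
  + exact: leafed_clique_leaf.
  + by apply: leafed_clique_packing_number; lia.
  + by apply: leafed_clique_delete_packing_number; lia.
Qed.
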